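(* Let $\boldsymbol{m}\in\mathbb{N}^2$, $\mathscr{f}\in C(\mathbb{D})$, and $f(\boldsymbol{i})=\mathscr{f}(r_{i_1},\theta_{i_2})$ for $\boldsymbol{i}\in\mathrm{I}^{(\boldsymbol{m})}$. Let $P_f$ be the unique function in $\Pi_\square=\mathrm{span}\{X_{\boldsymbol{\gamma}}:\boldsymbol{\gamma}\in\Gamma_\square\}$ with $P_f(r_{i_1},\theta_{i_2})=f(\boldsymbol{i})$ for all $\boldsymbol{i}\in\mathrm{I}^{(\boldsymbol{m})}$. Then $P_f\in C(\mathbb{D})$; in particular $P_f(0,\theta)=\mathscr{f}(0,0)$ for all $\theta\in[-\pi,\pi]$.
   Context: Functions on the unit disk are written in polar coordinates $(r,\theta)\in[0,1]\times[-\pi,\pi]$, and $C(\mathbb{D})$ is the set of continuous $\mathscr{f}$ on $[0,1]\times[-\pi,\pi]$ with $\mathscr{f}(r,-\pi)=\mathscr{f}(r,\pi)$ for $0\le r\le1$ and $\mathscr{f}(0,\theta_1)=\mathscr{f}(0,\theta_2)$ for all $\theta_1,\theta_2$ (the common value at $r=0$ is written $\mathscr{f}(0,0)$). $\mathrm{I}^{(\boldsymbol{m})}=\{(i_1,i_2)\in\mathbb{Z}^2:\ 0\le i_1\le m_1,\ -2m_2<i_2\le 2m_2,\ i_2\le0\text{ if }i_1=m_1,\ i_1+i_2\text{ even}\}$, $r_{i_1}=\cos\!\big(\frac{i_1\pi}{2m_1}\big)$, $\theta_{i_2}=\frac{i_2\pi}{2m_2}$. $X_{\boldsymbol{\gamma}}(r,\theta)=T_{\gamma_1}(r)e^{\mathrm{i}\gamma_2\theta}$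 with $T_n(r)=\cos(n\arccos r)$. $\Gamma_\square=\{\boldsymbol{\gamma}\in\mathbb{Z}^2: 0\le\gamma_1\le2m_1,\ -m_2<\gamma_2\le m_2,\ \gamma_1+\gamma_2\text{ even}\}$; the interpolation problem in $\Pi_\square$ has a unique solution. *)

From Stdlib Require Import Reals Lra Lia ZArith List.
Import ListNotations.
Open Scope R_scope.

Definition Cplx : Type := (R * R)%type.
Definition C0 : Cplx := (0, 0).
Definition Cadd (a b : Cplx) : Cplx := (fst a + fst b, snd a + snd b).
Definition Cmul (a b : Cplx) : Cplx :=
  (fst a * fst b - snd a * snd b, fst a * snd b + snd a * fst b).

Definition chebT (n : Z) (r : R) : R := cos (IZR n * acos r).

Definition Xg (g : Z * Z) (r th : R) : Cplx :=
  (chebT (fst g) r * cos (IZR (snd g) * th),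
   chebT (fst g) r * sin (IZR (snd g) * th)).

(** Gamma_square = {(g1,g2) : 0 <= g1 <= 2 m1, -m2 < g2 <= m2, g1+g2 even},
    listed without repetition. *)
Definition Gamma_sq (m1 m2 : nat) : list (Z * Z) :=
  filter (fun g => Z.even (fst g + snd g))
    (list_prod (map Z.of_nat (seq 0 (2 * m1 + 1)))
               (map (fun k => (Z.of_nat k - Z.of_nat m2 + 1)%Z) (seq 0 (2 * m2)))).

Definition Ppoly (m1 m2 : nat) (c : Z * Z -> Cplx) (r th : R) : Cplx :=
  fold_right (fun g acc => Cadd (Cmul (c g) (Xg g r th)) acc) C0 (Gamma_sq m1 m2).

Definition in_I (m1 m2 : nat) (i1 i2 : Z) : Prop :=
  (0 <= i1 <= Z.of_nat m1)%Z /\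
  (- 2 * Z.of_nat m2 < i2 <= 2 * Z.of_nat m2)%Z /\
  (i1 = Z.of_nat m1 -> (i2 <= 0)%Z) /\
  Z.Even (i1 + i2).

Definition r_node (m1 : nat) (i1 : Z) : R := cos (IZR i1 * PI / (2 * INR m1)).
Definition th_node (m2 : nat) (i2 : Z) : R := IZR i2 * PI / (2 * INR m2).

Definition cont_rect (F : R -> R -> Cplx) : Prop :=
  forall r th, 0 <= r <= 1 -> - PI <= th <= PI ->
  forall eps, 0 < eps -> exists delta, 0 < delta /\
    forall r' th', 0 <= r' <= 1 -> - PI <= th' <= PI ->
      Rabs (r' - r) < delta -> Rabs (th' - th) < delta ->
      Rabs (fst (F r' th') - fst (F r th)) < eps /\
      Rabs (snd (F r' th') - snd (F r th)) < eps.

Definition in_CD (F : R -> R -> Cplx) : Prop :=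
  cont_rect F /\
  (forall r, 0 <= r <= 1 -> F r (- PI) = F r PI) /\
  (forall th1 th2, - PI <= th1 <= PI -> - PI <= th2 <= PI -> F 0 th1 = F 0 th2).

From Stdlib Require Import Reals ZArith List Lra Lia.
From Coquelicot Require Import Coquelicot.
Open Scope R_scope.

(* On [0, 1] the Chebyshev function [cos (n acos r)] agrees with the polynomial of the
   three-term recurrence, so every [X_gamma], hence [P_f], is jointly continuous, and it is
   [2 PI]-periodic in [theta] because the frequencies are integers.
   For the centre, [T_n(0) = cos (n PI / 2)] vanishes for odd [n], so [P_f(0, .)] only
   involves the frequencies [2 k] with [-m2 < 2 k <= m2], a window of [m2] consecutive [k].
   The nodes with [i1 = m1] lie on [r = 0] at [m2] angles equispaced with step [PI / m2],
   where [P_f] takes the value [f(0,0)].  Discrete Fourier interpolation at these angles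
   reproduces every trigonometric polynomial with frequencies in the window, in particular
   both [P_f(0, .)] and the constant [f(0,0)], which therefore coincide. *)

Definition jcont (G : R -> R -> R) : Prop :=
  forall r th, continuous (fun q : R * R => G (fst q) (snd q)) (r, th).

Definition cjcont (F : R -> R -> Cplx) : Prop :=
  jcont (fun r th => fst (F r th)) /\ jcont (fun r th => snd (F r th)).

Lemma jcont_const a : jcont (fun _ _ => a).
Proof. intros r th; apply continuous_const. Qed.

Lemma jcont_plus F G : jcont F -> jcont G -> jcont (fun r th => F r th + G r th).
Proof. intros HF HG r th; exact (continuous_plus _ _ _ (HF r th) (HG r th)). Qed.

Lemma jcont_minus F G : jcont F -> jcont G -> jcont (fun r th => F r th - G r th).
Proof.
  intros HF HG r th.
  exact (continuous_plus _ _ _ (HF r th) (continuous_opp _ _ (HG r th))).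
Qed.

Lemma jcont_mult F G : jcont F -> jcont G -> jcont (fun r th => F r th * G r th).
Proof. intros HF HG r th; exact (continuous_mult _ _ _ (HF r th) (HG r th)). Qed.

Lemma jcont_l h : continuity h -> jcont (fun r _ => h r).
Proof.
  intros Hh r th.
  apply (continuous_comp (fun q : R * R => fst q) h); first apply continuous_fst.
  apply continuity_pt_filterlim, Hh.
Qed.

Lemma jcont_r h : continuity h -> jcont (fun _ th => h th).
Proof.
  intros Hh r th.
  apply (continuous_comp (fun q : R * R => snd q) h); first apply continuous_snd.
  apply continuity_pt_filterlim, Hh.
Qed.

Lemma jcont_eps G r th eps : jcont G -> 0 < eps -> exists delta, 0 < delta /\
  forall r' th', Rabs (r' - r) < delta -> Rabs (th' - th) < delta ->
    Rabs (G r' th' - G r th) < eps.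
Proof.
  intros HG Heps.
  pose proof (proj1 (filterlim_locally _ _) (HG r th) (mkposreal eps Heps)) as Hloc.
  destruct (proj2 (locally_2d_locally (fun u v => ball (G r th) (mkposreal eps Heps) (G u v)) r th)
              Hloc) as [delta Hdelta].
  exists delta; split; [apply cond_pos | exact Hdelta].
Qed.

Lemma cjcont_const a : cjcont (fun _ _ => a).
Proof. split; apply jcont_const. Qed.

Lemma cjcont_Cadd F G : cjcont F -> cjcont G -> cjcont (fun r th => Cadd (F r th) (G r th)).
Proof. intros [F1 F2] [G1 G2]; split; apply jcont_plus; assumption. Qed.

Lemma cjcont_Cmul F G : cjcont F -> cjcont G -> cjcont (fun r th => Cmul (F r th) (G r th)).
Proof.
  intros [F1 F2] [G1 G2]; split; simpl.
  - apply jcont_minus; apply jcont_mult; assumption.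
  - apply jcont_plus; apply jcont_mult; assumption.
Qed.

Lemma cont_rect_of_cjcont F G :
  cjcont G -> (forall r th, 0 <= r <= 1 -> F r th = G r th) -> cont_rect F.
Proof.
  intros [G1 G2] HFG r th Hr _ eps Heps.
  destruct (jcont_eps _ r th eps G1 Heps) as [d1 [Hd1 P1]].
  destruct (jcont_eps _ r th eps G2 Heps) as [d2 [Hd2 P2]].
  exists (Rmin d1 d2); split; first (apply Rmin_pos; assumption).
  intros r' th' Hr' _ Hdr Hdth.
  rewrite (HFG r th Hr), (HFG r' th' Hr').
  pose proof (Rmin_l d1 d2); pose proof (Rmin_r d1 d2).
  split; [apply P1 | apply P2]; lra.
Qed.

Fixpoint cheb_poly (n : nat) (r : R) : R :=
  match n with
  | O => 1
  | S O => r
  | S ((S k) as n1) => 2 * r * cheb_poly n1 r - cheb_poly k r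
  end.

Lemma continuity_cheb_poly n : continuity (cheb_poly n).
Proof.
  assert (H : continuity (cheb_poly n) /\ continuity (cheb_poly (S n))).
  { induction n as [|n [IH1 IH2]]; split; try assumption.
    - apply continuity_const; intros ? ?; reflexivity.
    - apply derivable_continuous, derivable_id.
    - change (continuity (fun r => 2 * r * cheb_poly (S n) r - cheb_poly n r)).
      apply continuity_minus, IH1; apply continuity_mult, IH2.
      apply continuity_scal, derivable_continuous, derivable_id. }
  exact (proj1 H).
Qed.

Lemma chebT_cheb_poly n r : -1 <= r <= 1 -> chebT (Z.of_nat n) r = cheb_poly n r.
Proof.
  intros Hr; unfold chebT; rewrite <- INR_IZR_INZ.
  enough (cos (INR n * acos r) = cheb_poly n r /\
          cos (INR (S n) * acos r) = cheb_poly (S n) r) by tauto.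
  induction n as [|n [IH1 IH2]].
  - simpl; rewrite Rmult_0_l, Rmult_1_l, cos_0, cos_acos; auto.
  - split; first exact IH2.
    change (cheb_poly (S (S n)) r) with (2 * r * cheb_poly (S n) r - cheb_poly n r).
    rewrite <- IH1, <- IH2.
    replace (2 * r) with (2 * cos (acos r)) by (rewrite cos_acos; auto).
    set (a := acos r).
    replace (INR (S (S n)) * a) with ((INR (S n) * a) + a) by (rewrite !S_INR; ring).
    replace (INR n * a) with ((INR (S n) * a) - a) by (rewrite S_INR; ring).
    rewrite cos_plus, cos_minus; ring.
Qed.
Definition cis (x : R) : C := (cos x, sin x).

Lemma cis_add x y : cis (x + y) = Cmult (cis x) (cis y).
Proof. unfold cis, Cmult; simpl; rewrite cos_plus, sin_plus; f_equal; ring. Qed.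

Lemma cis_0 : cis 0 = RtoC 1.
Proof. unfold cis, RtoC; rewrite cos_0, sin_0; reflexivity. Qed.

Lemma cis_2PI_mult (k : Z) : cis (IZR k * (2 * PI)) = RtoC 1.
Proof.
  replace (IZR k * (2 * PI)) with (2 * (IZR k * PI)) by ring.
  unfold cis, RtoC; rewrite cos_2a_sin, sin_2a, (sin_eq_0_1 (IZR k * PI) (ex_intro _ k eq_refl)); f_equal; ring.
Qed.

Lemma cis_2PI_frac_neq1 (m : nat) (d : Z) :
  (0 < m)%nat -> d <> 0%Z -> (- Z.of_nat m < d < Z.of_nat m)%Z ->
  cis (2 * (IZR d * PI / INR m)) <> RtoC 1.
Proof.
  intros Hm Hd Hdm E; injection E as Ecos _.
  assert (Hmr : 0 < INR m) by (apply lt_0_INR; assumption).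
  rewrite cos_2a_sin in Ecos.
  assert (Hsin : sin (IZR d * PI / INR m) = 0) by nra.
  destruct (sin_eq_0_0 _ Hsin) as [k Hk].
  assert (Hdk : IZR d = IZR (k * Z.of_nat m)).
  { rewrite mult_IZR, <- INR_IZR_INZ.
    apply (Rmult_eq_reg_r (PI / INR m)); [| pose proof PI_RGT_0; apply Rgt_not_eq, Rdiv_lt_0_compat; lra].
    replace (IZR d * (PI / INR m)) with (IZR d * PI / INR m) by (field; lra).
    rewrite Hk; field; lra. }
  apply eq_IZR in Hdk; subst d.
  destruct (Z.lt_trichotomy k 0) as [Hk0|[Hk0|Hk0]]; nia.
Qed.

Fixpoint csum (n : nat) (f : nat -> C) : C :=
  match n with O => RtoC 0 | S k => Cplus (csum k f) (f k) end.

Lemma csum_ext n f g : (forall j, (j < n)%nat -> f j = g j) -> csum n f = csum n g.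
Proof.
  induction n as [|n IH]; intros H; simpl; [reflexivity|].
  rewrite IH, H by (intros; apply H || idtac; lia); reflexivity.
Qed.

Lemma csum_plus n f g : csum n (fun j => Cplus (f j) (g j)) = Cplus (csum n f) (csum n g).
Proof. induction n as [|n IH]; simpl; [|rewrite IH]; ring. Qed.

Lemma csum_mult_l n a f : csum n (fun j => Cmult a (f j)) = Cmult a (csum n f).
Proof. induction n as [|n IH]; simpl; [|rewrite IH]; ring. Qed.

Lemma csum_swap n k F :
  csum n (fun j => csum k (fun l => F j l)) = csum k (fun l => csum n (fun j => F j l)).
Proof.
  induction n as [|n IH]; simpl.
  - induction k as [|k IHk]; simpl; [reflexivity | rewrite <- IHk; ring].
  - rewrite IH, <- csum_plus; reflexivity.
Qed.

Lemma csum_0 n f : (forall j, (j < n)%nat -> f j = RtoC 0) -> csum n f = RtoC 0.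
Proof.
  induction n as [|n IH]; intros H; simpl; [reflexivity|].
  rewrite IH, H by (intros; apply H || idtac; lia); ring.
Qed.

Lemma csum_delta n j0 f : (j0 < n)%nat ->
  (forall j, (j < n)%nat -> j <> j0 -> f j = RtoC 0) -> csum n f = f j0.
Proof.
  induction n as [|n IH]; intros Hj0 H; simpl; [lia|].
  destruct (Nat.eq_dec j0 n) as [->|Hne].
  - rewrite csum_0 by (intros; apply H; lia); ring.
  - rewrite IH, (H n) by (intros; try apply H; lia); ring.
Qed.

Lemma csum_const_1 n : csum n (fun _ => RtoC 1) = RtoC (INR n).
Proof.
  induction n as [|n IH]; [reflexivity|]; cbn [csum].
  rewrite IH, S_INR; unfold RtoC, Cplus; simpl; f_equal; ring.
Qed.

Lemma csum_cis_geom n b :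
  Cmult (Cminus (cis b) 1) (csum n (fun j => cis (INR j * b))) = Cminus (cis (INR n * b)) 1.
Proof.
  induction n as [|n IH]; cbn [csum].
  - rewrite Rmult_0_l, cis_0; ring.
  - rewrite Cmult_plus_distr_l, IH, S_INR, Rmult_plus_distr_r, Rmult_1_l, cis_add; ring.
Qed.

Definition node (m : nat) (x0 : R) (j : nat) : R := x0 - INR j * PI / INR m.

Lemma csum_cis_node (m : nat) (x0 : R) (d : Z) :
  (0 < m)%nat -> d <> 0%Z -> (- Z.of_nat m < d < Z.of_nat m)%Z ->
  csum m (fun j => cis (2 * IZR d * node m x0 j)) = RtoC 0.
Proof.
  intros Hm Hd Hdm.
  assert (Hmr : 0 < INR m) by (apply lt_0_INR; assumption).
  set (b := 2 * (IZR (- d) * PI / INR m)).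
  rewrite (csum_ext _ _ (fun j => Cmult (cis (2 * IZR d * x0)) (cis (INR j * b)))).
  2:{ intros j _; rewrite <- cis_add; f_equal; unfold node, b; rewrite opp_IZR; field; lra. }
  rewrite csum_mult_l.
  pose proof (csum_cis_geom m b) as Hgeom.
  replace (INR m * b) with (IZR (- d) * (2 * PI)) in Hgeom by (unfold b; field; lra).
  rewrite cis_2PI_mult in Hgeom.
  assert (Hb : Cminus (cis b) 1 <> RtoC 0).
  { intro E; apply (cis_2PI_frac_neq1 m (- d)); [assumption | lia | lia |].
    fold b; replace (cis b) with (Cplus (Cminus (cis b) 1) 1) by ring; rewrite E; ring. }
  set (S := csum m (fun j => cis (INR j * b))) in *.
  replace S with (Cmult (Cinv (Cminus (cis b) 1)) (Cmult (Cminus (cis b) 1) S)) by (field; exact Hb).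
  rewrite Hgeom; ring.
Qed.

(* Discrete Fourier interpolation at the [m] nodes [node m x0 j] in the span of
   [cis (2 k t)], [L <= k < L + m]; the kernel is the inner sum over [l]. *)
Definition trig_interp (m : nat) (L : Z) (x0 : R) (F : R -> C) (t : R) : C :=
  Cmult (Cinv (RtoC (INR m)))
    (csum m (fun j => Cmult (F (node m x0 j))
       (csum m (fun l => cis (2 * IZR (L + Z.of_nat l) * (t - node m x0 j)))))).

Lemma trig_interp_ext m L x0 F G t :
  (forall j, (j < m)%nat -> F (node m x0 j) = G (node m x0 j)) ->
  trig_interp m L x0 F t = trig_interp m L x0 G t.
Proof. intros H; unfold trig_interp; f_equal; apply csum_ext; intros j Hj; rewrite H; auto. Qed.

Lemma trig_interp_plus m L x0 F G t :
  trig_interp m L x0 (fun x => Cplus (F x) (G x)) t =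
  Cplus (trig_interp m L x0 F t) (trig_interp m L x0 G t).
Proof.
  unfold trig_interp; rewrite <- Cmult_plus_distr_l, <- csum_plus.
  f_equal; apply csum_ext; intros; ring.
Qed.

Lemma trig_interp_mult_l m L x0 a F t :
  trig_interp m L x0 (fun x => Cmult a (F x)) t = Cmult a (trig_interp m L x0 F t).
Proof.
  unfold trig_interp.
  set (K := fun j => csum m (fun l => cis (2 * IZR (L + Z.of_nat l) * (t - node m x0 j)))).
  rewrite (csum_ext _ _ (fun j => Cmult a (Cmult (F (node m x0 j)) (K j)))).
  2:{ intros; unfold K; ring. }
  rewrite csum_mult_l; unfold K; ring.
Qed.

Lemma trig_interp_cis m L x0 k t : (0 < m)%nat -> (L <= k < L + Z.of_nat m)%Z ->
  trig_interp m L x0 (fun x => cis (2 * IZR k * x)) t = cis (2 * IZR k * t).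
Proof.
  intros Hm Hk.
  assert (Hmr : 0 < INR m) by (apply lt_0_INR; assumption).
  unfold trig_interp.
  rewrite (csum_ext _ _ (fun j => csum m (fun l =>
             Cmult (cis (2 * IZR (L + Z.of_nat l) * t))
                   (cis (2 * IZR (k - (L + Z.of_nat l)) * node m x0 j))))).
  2:{ intros j _; rewrite <- csum_mult_l; apply csum_ext; intros l _.
      rewrite <- !cis_add; f_equal; rewrite minus_IZR; ring. }
  rewrite csum_swap.
  rewrite (csum_ext _ _ (fun l => Cmult (cis (2 * IZR (L + Z.of_nat l) * t))
             (csum m (fun j => cis (2 * IZR (k - (L + Z.of_nat l)) * node m x0 j)))))
    by (intros; apply csum_mult_l).
  (* only the frequency [l = k - L] survives the orthogonality relations *)
  rewrite (csum_delta m (Z.to_nat (k - L))); [| lia |].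
  - replace (L + Z.of_nat (Z.to_nat (k - L)))%Z with k by lia.
    rewrite Z.sub_diag.
    rewrite (csum_ext _ _ (fun _ => RtoC 1))
      by (intros; rewrite Rmult_0_r, Rmult_0_l; apply cis_0).
    rewrite csum_const_1; field.
    intro E; injection E; lra.
  - intros l Hl Hne; rewrite csum_cis_node by lia; ring.
Qed.

Lemma trig_interp_const m L x0 a t : (0 < m)%nat -> (L <= 0 < L + Z.of_nat m)%Z ->
  trig_interp m L x0 (fun _ => a) t = a.
Proof.
  intros Hm HL.
  rewrite (trig_interp_ext _ _ _ _ (fun x => Cmult a (cis (2 * IZR 0 * x))))
    by (intros; rewrite Rmult_0_r, Rmult_0_l, cis_0; ring).
  rewrite trig_interp_mult_l, trig_interp_cis by assumption.
  rewrite Rmult_0_r, Rmult_0_l, cis_0; ring.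
Qed.

Lemma Gamma_sq_spec m1 m2 g : In g (Gamma_sq m1 m2) ->
  (0 <= fst g)%Z /\ Z.even (fst g + snd g) = true /\
  (- Z.of_nat m2 < snd g <= Z.of_nat m2)%Z.
Proof.
  unfold Gamma_sq; intros [Hg Heven]%filter_In.
  destruct g as [g1 g2]; apply in_prod_iff in Hg as [H1 H2].
  apply in_map_iff in H1 as [a [<- Ha%in_seq]].
  apply in_map_iff in H2 as [b [<- Hb%in_seq]].
  simpl in *; repeat split; solve [assumption | lia].
Qed.

Definition Xcheb (g : Z * Z) (r th : R) : Cplx :=
  (cheb_poly (Z.to_nat (fst g)) r * cos (IZR (snd g) * th),
   cheb_poly (Z.to_nat (fst g)) r * sin (IZR (snd g) * th)).

Lemma cjcont_Xcheb g : cjcont (Xcheb g).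
Proof.
  assert (Hlin : continuity (fun th => IZR (snd g) * th))
    by apply continuity_scal, derivable_continuous, derivable_id.
  split; apply jcont_mult; try apply jcont_l, continuity_cheb_poly; apply jcont_r.
  - exact (continuity_comp _ _ Hlin continuity_cos).
  - exact (continuity_comp _ _ Hlin continuity_sin).
Qed.

Lemma Xg_Xcheb g r th : (0 <= fst g)%Z -> -1 <= r <= 1 -> Xg g r th = Xcheb g r th.
Proof.
  intros Hg Hr; unfold Xg, Xcheb.
  rewrite <- chebT_cheb_poly, Z2Nat.id by assumption; reflexivity.
Qed.

Lemma cont_rect_Ppoly m1 m2 c : cont_rect (Ppoly m1 m2 c).
Proof.
  apply (cont_rect_of_cjcont _ (fun r th =>
    fold_right (fun g acc => Cadd (Cmul (c g) (Xcheb g r th)) acc) C0 (Gamma_sq m1 m2))).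
  - induction (Gamma_sq m1 m2) as [|g Gs IH]; simpl; [apply cjcont_const|].
    apply cjcont_Cadd, IH; apply cjcont_Cmul; [apply cjcont_const | apply cjcont_Xcheb].
  - intros r th Hr; unfold Ppoly.
    pose proof (Gamma_sq_spec m1 m2) as Hspec; revert Hspec.
    induction (Gamma_sq m1 m2) as [|g Gs IH]; intros Hspec; simpl; [reflexivity|].
    rewrite IH by (intros; apply Hspec; right; assumption).
    rewrite Xg_Xcheb; [reflexivity | apply (Hspec g); left; reflexivity | lra].
Qed.

Lemma Ppoly_periodic m1 m2 c r : Ppoly m1 m2 c r (- PI) = Ppoly m1 m2 c r PI.
Proof.
  unfold Ppoly; induction (Gamma_sq m1 m2) as [|g Gs IH]; simpl; [reflexivity|].
  rewrite IH; unfold Xg.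
  rewrite <- Ropp_mult_distr_r, cos_neg, sin_neg.
  rewrite (sin_eq_0_1 _ (ex_intro _ (snd g) eq_refl)), Ropp_0; reflexivity.
Qed.

Lemma Xg_cis g r th : Xg g r th = Cmult (RtoC (chebT (fst g) r)) (cis (IZR (snd g) * th)).
Proof. unfold Xg, cis, RtoC, Cmult; simpl; f_equal; ring. Qed.

Lemma chebT_odd_0 n : Z.odd n = true -> chebT n 0 = 0.
Proof.
  intros [k Hk]%Z.odd_spec; unfold chebT; rewrite acos_0.
  apply cos_eq_0_1; exists k; rewrite Hk, plus_IZR, mult_IZR; field.
Qed.

Lemma half_window (m k : Z) : (0 < m)%Z -> (- m < 2 * k <= m)%Z ->
  (- ((m - 1) / 2) <= k < - ((m - 1) / 2) + m)%Z.
Proof. intros; Z.div_mod_to_equations; lia. Qed.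

Section Center.

Variables (m1 m2 : nat) (c : Z * Z -> Cplx).
Hypothesis Hm2 : (0 < m2)%nat.

Let L : Z := (- ((Z.of_nat m2 - 1) / 2))%Z.

Lemma trig_interp_Xg_0 x0 g t :
  Z.even (fst g + snd g) = true -> (- Z.of_nat m2 < snd g <= Z.of_nat m2)%Z ->
  trig_interp m2 L x0 (Xg g 0) t = Xg g 0 t.
Proof.
  intros Heven Hg2.
  rewrite (trig_interp_ext _ _ _ _ (fun x => Cmult (RtoC (chebT (fst g) 0)) (cis (IZR (snd g) * x))))
    by (intros; apply Xg_cis).
  rewrite trig_interp_mult_l, Xg_cis.
  destruct (Z.even (fst g)) eqn:Eg1.
  - rewrite Z.even_add, Eg1 in Heven.
    destruct (Z.even (snd g)) eqn:Eg2; [clear Heven | discriminate].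
    apply Z.even_spec in Eg2 as [k Hk]; rewrite Hk, mult_IZR.
    rewrite trig_interp_cis by (try apply half_window; lia).
    reflexivity.
  - rewrite chebT_odd_0 by (rewrite <- Z.negb_even, Eg1; reflexivity).
    ring.
Qed.

Lemma trig_interp_Ppoly_0 x0 t :
  trig_interp m2 L x0 (Ppoly m1 m2 c 0) t = Ppoly m1 m2 c 0 t.
Proof.
  unfold Ppoly.
  pose proof (Gamma_sq_spec m1 m2) as Hspec; revert Hspec.
  induction (Gamma_sq m1 m2) as [|g Gs IH]; intros Hspec; simpl.
  - change C0 with (RtoC 0); unfold trig_interp.
    rewrite csum_0 by (intros; ring); ring.
  - change Cadd with Cplus in IH |- *; change Cmul with Cmult in IH |- *.
    rewrite trig_interp_plus, trig_interp_mult_l.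
    destruct (Hspec g (or_introl eq_refl)) as (_ & Heven & Hg2).
    rewrite IH by (intros; apply Hspec; right; assumption).
    rewrite trig_interp_Xg_0 by assumption.
    reflexivity.
Qed.

End Center.

Lemma th_node_bound m i : (0 < m)%nat -> (- 2 * Z.of_nat m <= i <= 2 * Z.of_nat m)%Z ->
  - PI <= th_node m i <= PI.
Proof.
  intros Hm Hi; unfold th_node.
  assert (HM : 0 < INR m) by (apply lt_0_INR; assumption).
  assert (Hq : - (2 * INR m) <= IZR i <= 2 * INR m).
  { rewrite INR_IZR_INZ, <- mult_IZR, <- opp_IZR; split; apply IZR_le; lia. }
  pose proof PI_RGT_0.
  replace (IZR i * PI / (2 * INR m)) with (IZR i / (2 * INR m) * PI) by (field; lra).
  assert (-1 <= IZR i / (2 * INR m) <= 1).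
  { split; [apply Rmult_le_reg_r with (2 * INR m) | apply Rmult_le_reg_r with (2 * INR m)];
      try lra; unfold Rdiv; rewrite Rmult_assoc, Rinv_l; lra. }
  split; nra.
Qed.

Lemma node_th_node m p j : (0 < m)%nat ->
  node m (th_node m (- p)) j = th_node m (- (2 * Z.of_nat j + p)).
Proof.
  intros Hm; assert (0 < INR m) by (apply lt_0_INR; assumption).
  unfold node, th_node; rewrite !opp_IZR, plus_IZR, mult_IZR, <- INR_IZR_INZ; field; lra.
Qed.

Lemma r_node_center m : (0 < m)%nat -> r_node m (Z.of_nat m) = 0.
Proof.
  intros Hm; assert (0 < INR m) by (apply lt_0_INR; assumption).
  unfold r_node; rewrite <- INR_IZR_INZ.
  replace (INR m * PI / (2 * INR m)) with (PI / 2) by (field; lra); apply cos_PI2.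
Qed.

Lemma in_I_center m1 m2 j : (j < m2)%nat ->
  in_I m1 m2 (Z.of_nat m1) (- (2 * Z.of_nat j + Z.of_nat m1 mod 2)).
Proof.
  intros Hj; unfold in_I.
  split; [lia | split; [Z.div_mod_to_equations; lia | split; [intros; Z.div_mod_to_equations; lia |]]].
  exists (Z.of_nat m1 / 2 - Z.of_nat j)%Z; Z.div_mod_to_equations; lia.
Qed.

Lemma Ppoly_center m1 m2 (f : R -> R -> Cplx) c : (0 < m1)%nat -> (0 < m2)%nat ->
  (forall th1 th2, - PI <= th1 <= PI -> - PI <= th2 <= PI -> f 0 th1 = f 0 th2) ->
  (forall i1 i2 : Z, in_I m1 m2 i1 i2 ->
     Ppoly m1 m2 c (r_node m1 i1) (th_node m2 i2) = f (r_node m1 i1) (th_node m2 i2)) ->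
  forall th, Ppoly m1 m2 c 0 th = f 0 0.
Proof.
  intros Hm1 Hm2 Hf0 Hinterp th.
  rewrite <- (trig_interp_Ppoly_0 m1 m2 c Hm2 (th_node m2 (- (Z.of_nat m1 mod 2))) th).
  rewrite (trig_interp_ext _ _ _ _ (fun _ => f 0 0)).
  - apply trig_interp_const; [assumption | Z.div_mod_to_equations; lia].
  - intros j Hj.
    pose proof (Hinterp _ _ (in_I_center m1 m2 j Hj)) as Hnode.
    rewrite r_node_center in Hnode by assumption.
    rewrite node_th_node, Hnode by assumption.
    pose proof PI_RGT_0.
    apply Hf0; [apply th_node_bound; [assumption | Z.div_mod_to_equations; lia] | lra].
Qed.

Theorem theorem8p1 (m1 m2 : nat) (f : R -> R -> Cplx) (c : Z * Z -> Cplx) :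
  (0 < m1)%nat -> (0 < m2)%nat ->
  in_CD f ->
  (forall i1 i2 : Z, in_I m1 m2 i1 i2 ->
     Ppoly m1 m2 c (r_node m1 i1) (th_node m2 i2) = f (r_node m1 i1) (th_node m2 i2)) ->
  in_CD (Ppoly m1 m2 c) /\
  (forall th, - PI <= th <= PI -> Ppoly m1 m2 c 0 th = f 0 0).
Proof.
  intros Hm1 Hm2 (_ & _ & Hf0) Hinterp.
  pose proof (Ppoly_center m1 m2 f c Hm1 Hm2 Hf0 Hinterp) as Hcenter.
  split; [split; [|split] |].
  - apply cont_rect_Ppoly.
  - intros r _; apply Ppoly_periodic.
  - intros th1 th2 _ _; rewrite !Hcenter; reflexivity.
  - intros th _; apply Hcenter.
Qed.
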